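(* For the log-loss $\ell_{\log}(\mathrm{h},(x,y))=-\log\mathrm{h}(y|x)$ (score $L(\mathrm{q},y)=-\log\mathrm{q}(y)$) and $\mathbf{a},\mathbf{b}\in\mathbb{R}^m$, the problem $\mathscr{P}_{\ell_{\log}}^{\mathbf{a},\mathbf{b}}$ is equivalent to $$\mathscr{P}_{\log}^{\mathbf{a},\mathbf{b}}:\ \min_{\boldsymbol{\mu},\boldsymbol{\eta},\nu}\ \tfrac{1}{2}(\mathbf{b}-\mathbf{a})^{\mathrm{T}}\boldsymbol{\eta}-\tfrac{1}{2}(\mathbf{b}+\mathbf{a})^{\mathrm{T}}\boldsymbol{\mu}-\nu\ \text{ s.t. }\sum_{y\in\mathcal{Y}}\exp\{\Phi(x,y)^{\mathrm{T}}\boldsymbol{\mu}+\nu\}\leq 1\ \forall x\in\mathcal{X},\ \boldsymbol{\eta}+\boldsymbol{\mu}\succeq\mathbf{0},\ \boldsymbol{\eta}-\boldsymbol{\mu}\succeq\mathbf{0}.$$ In addition, for a solution $\boldsymbol{\mu}^*,\boldsymbol{\eta}^*,\nu^*$ of $\mathscr{P}_{\log}^{\mathbf{a},\mathbf{b}}$, the condition $\ell_{\log}(\mathrm{h},(x,y))+\Phi(x,y)^{\mathrm{T}}\boldsymbol{\mu}^*+\nu^*\leq 0$ for all $x,y$ (which makes $\mathrm{h}$ a log-MRC for $\mathcal{U}^{\mathbf{a},\mathbf{b}}$) becomes $$\mathrm{h}(y|x)\geq \exp\{\Phi(x,y)^{\mathrm{T}}\boldsymbol{\mu}^*+\nu^*\}\quad\forall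 x\in\mathcal{X},y\in\mathcal{Y}.$$
   Context: Let $\mathcal{X},\mathcal{Y}$ be finite nonempty sets, $\mathcal{Y}=\{1,\dots,|\mathcal{Y}|\}$; $\Delta(\mathcal{Y})$ is the set of probability distributions on $\mathcal{Y}$. A classification rule $\mathrm{h}$ assigns to each $x$ a distribution $\mathrm{h}(\cdot|x)\in\Delta(\mathcal{Y})$. For a score function $L$ with loss $\ell(\mathrm{h},(x,y))=L(\mathrm{h}(\cdot|x),y)$: $\Phi:\mathcal{X}\times\mathcal{Y}\to\mathbb{R}^m$ is a feature mapping, $\boldsymbol{\Phi}(x,\cdot)$ is the $|\mathcal{Y}|\times m$ matrix with rows $\Phi(x,y)^{\mathrm{T}}$, $\mathbf{1}$ the all-ones vector, $\preceq,\succeq$ componentwise, $\mathcal{L}=\{\mathbf{c}\in\mathbb{R}^{|\mathcal{Y}|}:\exists\,\mathrm{q}\in\Delta(\mathcal{Y}),\ \mathbf{c}+(L(\mathrm{q},y))_y\preceq\mathbf{0}\}$, and $\mathscr{P}_{\ell}^{\mathbf{a},\mathbf{b}}$ is $\min_{\boldsymbol{\mu},\boldsymbol{\eta},\nu}\tfrac12(\mathbf{b}-\mathbf{a})^{\mathrm{T}}\boldsymbol{\eta}-\tfrac12(\mathbf{b}+\mathbf{a})^{\mathrm{T}}\boldsymbol{\mu}-\nu$ s.t. $\boldsymbol{\Phi}(x,\cdot)\boldsymbol{\mu}+\nu\mathbf{1}\in\mathcal{L}$ $\forall x$, $\boldsymbol{\eta}\pm\boldsymbol{\mu}\succeq\mathbf{0}$.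 $\mathcal{U}^{\mathbf{a},\mathbf{b}}=\{\mathrm{p}\in\Delta(\mathcal{X}\times\mathcal{Y}):\mathbf{a}\preceq\mathbb{E}_{\mathrm{p}}\{\Phi\}\preceq\mathbf{b}\}$; an $\ell$-MRC for $\mathcal{U}$ minimizes $\max_{\mathrm{p}\in\mathcal{U}}\sum_{x,y}\mathrm{p}(x,y)\ell(\mathrm{h},(x,y))$ over all classification rules. *)

From HB Require Import structures.
From mathcomp Require Import all_boot all_order all_algebra.
From mathcomp Require Import all_classical all_reals all_analysis.
Set Implicit Arguments. Unset Strict Implicit. Unset Printing Implicit Defensive.
Import Order.TTheory GRing.Theory Num.Theory.
Local Open Scope ring_scope.

Section MRCDefs.
Variables (R : realType) (X Y : finType) (m : nat).

Definition dotv (u v : 'cV[R]_m) : R := \sum_(i < m) u i 0 * v i 0.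

Definition is_distr (q : Y -> R) : Prop :=
  (forall y, 0 <= q y) /\ \sum_(y : Y) q y = 1.

Definition is_rule (h : X -> Y -> R) : Prop := forall x, is_distr (h x).

Definition logscore (q : Y -> R) (y : Y) : \bar R :=
  if 0 < q y then (- ln (q y))%:E else +oo%E.

Definition Lset (L : (Y -> R) -> Y -> \bar R) (c : Y -> R) : Prop :=
  exists q, is_distr q /\ forall y, ((c y)%:E + L q y <= 0)%E.

Definition objective (a b mu eta : 'cV[R]_m) (nu : R) : R :=
  (1/2) * dotv (b - a) eta - (1/2) * dotv (b + a) mu - nu.

Definition box_constr (mu eta : 'cV[R]_m) : Prop :=
  (forall i, 0 <= eta i 0 + mu i 0) /\ (forall i, 0 <= eta i 0 - mu i 0).

Definition feasible_gen (L : (Y -> R) -> Y -> \bar R) (Phi : X -> Y -> 'cV[R]_m)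
  (mu eta : 'cV[R]_m) (nu : R) : Prop :=
  (forall x, Lset L (fun y => dotv (Phi x y) mu + nu)) /\ box_constr mu eta.

Definition feasible_log (Phi : X -> Y -> 'cV[R]_m)
  (mu eta : 'cV[R]_m) (nu : R) : Prop :=
  (forall x, \sum_(y : Y) expR (dotv (Phi x y) mu + nu) <= 1) /\ box_constr mu eta.

Definition solution_gen L a b Phi (mu eta : 'cV[R]_m) (nu : R) : Prop :=
  feasible_gen L Phi mu eta nu /\
  forall mu' eta' nu', feasible_gen L Phi mu' eta' nu' ->
    objective a b mu eta nu <= objective a b mu' eta' nu'.

Definition solution_log a b Phi (mu eta : 'cV[R]_m) (nu : R) : Prop :=
  feasible_log Phi mu eta nu /\
  forall mu' eta' nu', feasible_log Phi mu' eta' nu' ->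
    objective a b mu eta nu <= objective a b mu' eta' nu'.

End MRCDefs.

From HB Require Import structures.
From mathcomp Require Import all_boot all_order all_algebra.
From mathcomp Require Import all_classical all_reals all_analysis.
Import Order.TTheory GRing.Theory Num.Theory.
Local Open Scope ring_scope.

(* Since [-log] is decreasing, [-log q(y) + c(y) <= 0] says exactly
   [exp(c(y)) <= q(y)]; hence some distribution [q] satisfies it for all [y]
   iff [sum_y exp(c(y)) <= 1], the normalized exponentials being a witness. *)

Section LogScore.
Variables (R : realType) (Y : finType).

Lemma logscore_addr_le0 (q : Y -> R) (y : Y) (r : R) :
  (logscore q y + r%:E <= 0)%E <-> expR r <= q y.
Proof.
rewrite /logscore; case: ifP => [q_gt0|q_le0].
  by rewrite -EFinD lee_fin addrC subr_le0 -[in X in _ <-> X](lnK q_gt0) ler_expR.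
split=> [|exp_le]; first by rewrite addye.
by have := lt_le_trans (expR_gt0 r) exp_le; rewrite q_le0.
Qed.

Definition softmax (c : Y -> R) (y : Y) : R := expR (c y) / \sum_(z : Y) expR (c z).

Lemma sum_expR_gt0 (c : Y -> R) : (0 < #|Y|)%N -> 0 < \sum_(y : Y) expR (c y).
Proof.
case/card_gt0P=> y0 _; rewrite (bigD1 y0) //= ltr_wpDr ?expR_gt0 //.
by apply: sumr_ge0 => y _; exact/ltW/expR_gt0.
Qed.

Lemma softmax_distr (c : Y -> R) : (0 < #|Y|)%N -> is_distr (softmax c).
Proof.
move=> /(sum_expR_gt0 c) sum_gt0; split=> [y|].
  by rewrite divr_ge0 // ltW // expR_gt0.
by rewrite -mulr_suml mulfV // gt_eqF.
Qed.

Lemma Lset_logscore (c : Y -> R) : (0 < #|Y|)%N ->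
  Lset (@logscore R Y) c <-> \sum_(y : Y) expR (c y) <= 1.
Proof.
move=> Y_gt0; split=> [[q [[_ <-] score_le]]|sum_le1].
  by apply: ler_sum => y _; apply/logscore_addr_le0; rewrite addeC.
exists (softmax c); split; first exact: softmax_distr.
move=> y; rewrite addeC; apply/logscore_addr_le0.
by rewrite ler_pdivlMr ?sum_expR_gt0 // ler_piMr // ltW // expR_gt0.
Qed.

End LogScore.

Section LogMRC.
Variables (R : realType) (X Y : finType) (m : nat).
Variable Phi : X -> Y -> 'cV[R]_m.
Hypothesis Y_gt0 : (0 < #|Y|)%N.

Lemma feasible_gen_logscore (mu eta : 'cV[R]_m) (nu : R) :
  feasible_gen (@logscore R Y) Phi mu eta nu <-> feasible_log Phi mu eta nu.
Proof.
by split=> -[Lset_Phi box]; split=> // x; exact/(@Lset_logscore R Y _ Y_gt0).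
Qed.

Lemma solution_gen_logscore (a b mu eta : 'cV[R]_m) (nu : R) :
  solution_gen (@logscore R Y) a b Phi mu eta nu <-> solution_log a b Phi mu eta nu.
Proof.
split=> -[feas opt]; (split; first exact/feasible_gen_logscore);
by move=> mu' eta' nu' /feasible_gen_logscore; exact: opt.
Qed.

End LogMRC.

Theorem corollary5 (R : realType) (X Y : finType) (m : nat)
  (HX : (0 < #|X|)%N) (HY : (0 < #|Y|)%N)
  (Phi : X -> Y -> 'cV[R]_m) (a b : 'cV[R]_m) :
  (* P_{ell_log}^{a,b} and P_log^{a,b}: same objective, same feasible set, same solutions *)
  (forall (mu eta : 'cV[R]_m) (nu : R),
     (feasible_gen (@logscore R Y) Phi mu eta nu <-> feasible_log Phi mu eta nu) /\
     (solution_gen (@logscore R Y) a b Phi mu eta nu <-> solution_log a b Phi mu eta nu)) /\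
  (forall (mu eta : 'cV[R]_m) (nu : R), solution_log a b Phi mu eta nu ->
     forall h : X -> Y -> R, is_rule h ->
       ((forall x y, (logscore (h x) y + (dotv (Phi x y) mu + nu)%:E <= 0)%E) <->
        (forall x y, expR (dotv (Phi x y) mu + nu) <= h x y))).
Proof.
split=> [mu eta nu|mu eta nu _ h _].
  by split; [exact: feasible_gen_logscore | exact: solution_gen_logscore].
by split=> score_le x y; apply/logscore_addr_le0; exact: score_le.
Qed.
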